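(* Let $W\in\mathbb{R}^{a\times b}$ with columns $w_1,\dots,w_b$, and let $\sigma:\mathbb{R}\to\mathbb{R}$ be positive-homogeneous ($\sigma(\alpha t)=\alpha\sigma(t)$ for all $\alpha\ge0$, $t\in\mathbb{R}$) and not identically zero. Let $z\sim\mathcal N(0,I_a)$. For each neuron $j$ define the activity score \[ s_j=\frac{\mathbb{E}_z[|\sigma(\langle z,w_j\rangle)|]}{\frac1b\sum_{k=1}^b\mathbb{E}_z[|\sigma(\langle z,w_k\rangle)|]}. \] If $\varepsilon:=\sqrt{\mathrm{DfI}(W)}<1$, then for all $j$, \[ \sqrt{\frac{1-\varepsilon}{1+\varepsilon}}\le s_j\le\sqrt{\frac{1+\varepsilon}{1-\varepsilon}}. \]
   Context: $\mathrm{DfI}(W)=\|W^\top W-I\|_F^2$ (Deviation from Isometry), with $\|\cdot\|_F$ the Frobenius norm. *)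

From HB Require Import structures.
From mathcomp Require Import all_boot all_order all_algebra.
From mathcomp Require Import all_classical all_reals all_analysis.
Set Implicit Arguments. Unset Strict Implicit. Unset Printing Implicit Defensive.
Import Order.TTheory GRing.Theory Num.Theory.
Local Open Scope ring_scope.

Definition DfI {R : realType} {a b : nat} (W : 'M[R]_(a, b)) : R :=
  \sum_(i < b) \sum_(k < b) ((W^T *m W - 1%:M) i k) ^+ 2.

(* By Tonelli, for nonnegative measurable f this is E_{z ~ N(0, I_n)}[f z]. *)
Fixpoint gauss_iter {R : realType} (n : nat)
    (f : (nat -> R) -> \bar R) : \bar R :=
  match n with
  | 0 => f (fun _ => 0)
  | n'.+1 => (\int[normal_prob (0:R) 1]_x
               gauss_iter n' (fun z => f (fun i => if i == n' then x else z i)))%E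
  end.

Definition gauss_expect {R : realType} (a : nat)
    (g : ('I_a -> R) -> \bar R) : \bar R :=
  gauss_iter a (fun z => g (fun i => z (nat_of_ord i))).

Definition pos_homogeneous {R : realType} (sigma : R -> R) : Prop :=
  forall alpha t : R, 0 <= alpha -> sigma (alpha * t) = alpha * sigma t.

Definition neuron_act {R : realType} {a b : nat} (sigma : R -> R)
    (W : 'M[R]_(a, b)) (j : 'I_b) : \bar R :=
  gauss_expect (fun z => (`| sigma (\sum_(i < a) z i * W i j) |)%:E).

Definition activity_score {R : realType} {a b : nat} (sigma : R -> R)
    (W : 'M[R]_(a, b)) (j : 'I_b) : R :=
  fine (neuron_act sigma W j) /
    ((b%:R)^-1 * \sum_(k < b) fine (neuron_act sigma W k)).

From HB Require Import structures.
From mathcomp Require Import all_boot all_order all_algebra.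
From mathcomp Require Import all_classical all_reals all_analysis.
From mathcomp Require Import measurable_realfun normal_distribution ring lra.
Import Order.TTheory GRing.Theory Num.Theory.
Import numFieldNormedType.Exports.
Local Open Scope ring_scope.

(* For w in R^a, the Gaussian expectation of h(<z, w>) is that of h(|w| v)
   with v ~ N(0,1): integrating out one coordinate at a time, a N(0,1)-mixture
   of the laws N(s x, r^2) is N(0, r^2 + s^2), as the product of the two
   densities shows.  Positive homogeneity turns E|sigma(|w| v)| into |w| c with
   c = (|sigma 1| + |sigma (-1)|) / 2 * E|v| positive and finite, so s_j is
   |w_j| divided by the mean column norm.  Finally |(W^T W - I)_kk| is at most
   the Frobenius norm eps of W^T W - I, so every column norm lies in
   [sqrt (1 - eps), sqrt (1 + eps)], which gives both bounds. *)

Section integral_density.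
Local Open Scope classical_set_scope.
Local Open Scope ereal_scope.
Context d (T : measurableType d) (R : realType).
Variables (mu P : {measure set T -> \bar R}) (p : T -> R).
Hypotheses (mp : measurable_fun setT p) (p_ge0 : forall x, (0 <= p x)%R).
Hypothesis P_density :
  forall A, measurable A -> P A = \int[mu]_(x in A) (p x)%:E.

Import HBNNSimple.

Let integral_indic_density (A : set T) : measurable A ->
  \int[P]_x (\1_A x)%:E = \int[mu]_x ((\1_A x)%:E * (p x)%:E).
Proof.
move=> mA; rewrite integral_indic// setIT P_density// integral_mkcond/=.
apply: eq_integral => x _; rewrite patchE indicE.
by case: ifPn; rewrite ?mul1e ?mul0e.
Qed.

Let integral_nnsfun_density (f : {nnsfun T >-> R}) :
  \int[P]_x (f x)%:E = \int[mu]_x ((f x)%:E * (p x)%:E).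
Proof.
have mf r : measurable (f @^-1` [set r]) by exact: measurable_funPTI.
under [LHS]eq_integral do rewrite fimfunE -fsumEFin//.
rewrite [LHS]ge0_integral_fsum//; last 2 first.
- move=> r; apply/measurable_EFinP/measurable_funM => //;
  exact: measurable_indic.
- by move=> n x _; rewrite EFinM nnfun_muleindic_ge0.
under [RHS]eq_integral => x _.
  rewrite fimfunE -fsumEFin// ge0_mule_fsuml; last first.
    by move=> r; rewrite EFinM nnfun_muleindic_ge0.
  over.
rewrite [RHS]ge0_integral_fsum//; last 2 first.
- move=> r; apply: emeasurable_funM; apply/measurable_EFinP => //.
  by apply: measurable_funM => //; exact: measurable_indic.
- move=> n x _; rewrite -EFinM lee_fin mulr_ge0//.
  by rewrite -lee_fin EFinM nnfun_muleindic_ge0.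
apply: eq_fsbigr => r _.
under [RHS]eq_integral do rewrite EFinM -muleA.
have [r_lt0|r_ge0] := ltP r 0%R.
  rewrite !integral0_eq// => x _; rewrite preimage_nnfun0// indic0.
    by rewrite mul0e mule0.
  by rewrite mulr0.
have mi : measurable_fun setT (fun x => (\1_(f @^-1` [set r]) x : R)%:E).
  by apply/measurable_EFinP; exact: measurable_indic.
rewrite [RHS]ge0_integralZl//; last 2 first.
- by apply: emeasurable_funM => //; exact/measurable_EFinP.
- by move=> x _; rewrite mule_ge0// lee_fin.
under eq_integral do rewrite EFinM.
by rewrite ge0_integralZl// integral_indic_density.
Qed.

Lemma ge0_integral_density (f : T -> \bar R) :
  measurable_fun setT f -> (forall x, 0 <= f x) ->
  \int[P]_x f x = \int[mu]_x (f x * (p x)%:E).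
Proof.
move=> mf f_ge0; pose f_ := nnsfun_approx measurableT mf.
have f_nd x : {homo (fun n => f_ n x) : m n / (m <= n)%N >-> (m <= n)%R}.
  by move=> m n mn; have /lefP := nd_nnsfun_approx measurableT mf mn.
have f_cvg x : (EFin \o f_^~ x) @ \oo --> f x.
  by apply: cvg_nnsfun_approx => // y _; exact: f_ge0.
transitivity (limn (fun n => \int[P]_x (f_ n x)%:E)).
  rewrite -monotone_convergence//=.
  - by apply: eq_integral => x _; apply/esym/cvg_lim => //; exact: f_cvg.
  - by move=> n; apply/measurable_EFinP.
  - by move=> n ? _; rewrite lee_fin.
  - by move=> x _ m n mn; rewrite lee_fin f_nd.
transitivity (limn (fun n => \int[mu]_x ((f_ n x)%:E * (p x)%:E))); last first.
  rewrite -monotone_convergence//=.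
  - apply: eq_integral => x _; apply/cvg_lim => //.
    by apply: cvgeZr => //; exact: f_cvg.
  - by move=> n; apply: emeasurable_funM; apply/measurable_EFinP.
  - by move=> n x _; rewrite mule_ge0// lee_fin.
  - by move=> x _ m n mn; rewrite lee_wpmul2r ?lee_fin ?f_nd.
by congr (limn _); apply/funext => n; exact: integral_nnsfun_density.
Qed.

End integral_density.

Section lebesgue_change_of_variables.
Local Open Scope ereal_scope.
Context {R : realType}.
Local Notation mu := (@lebesgue_measure R).

Lemma ge0_integral_lebesgue_affine (c e : R) (G : R -> R) :
  (0 < c)%R -> continuous G -> (forall x, 0 <= G x)%R ->
  \int[mu]_x (G x)%:E = \int[mu]_x (G ((x + e) * c) * c)%:E.
Proof.
move=> c_gt0 cG G_ge0; pose F x := ((x + e) * c)%R.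
have F'E : F^`()%classic = cst c.
  apply/funext => x; rewrite /F derive1E deriveM// deriveD// derive_cst scaler0.
  by rewrite derive_id derive_cst addr0 scaler1 add0r.
rewrite (@increasing_ge0_integration_by_substitutionT _ F G)//; rewrite ?F'E.
- by apply: eq_integral.
- by move=> x y xy; rewrite /F ltr_pM2r// ltrD2r.
- by move=> ?; exact: cvg_cst.
- exact: is_cvg_cst.
- exact: is_cvg_cst.
- by apply: gt0_cvgMlNy => //; exact: cvg_addrr_Ny.
- by apply: gt0_cvgMly => //; exact: cvg_addrr.
Qed.

Lemma ge0_integral_lebesgueN (g : R -> \bar R) :
  measurable_fun setT g -> (forall x, 0 <= g x) ->
  \int[mu]_x g (- x)%R = \int[mu]_x g x.
Proof.
move=> mg g_ge0.
transitivity (\int[pushforward mu (-%R : R -> measurableTypeR R)]_x g x).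
  by rewrite ge0_integral_pushforward.
by apply: eq_measure_integral => //= A mA _; exact: lebesgue_measureN.
Qed.

End lebesgue_change_of_variables.

Section normal_pdf.
Context {R : realType}.

Lemma sqrt_pi2_gt0 : 0 < Num.sqrt (pi *+ 2 : R).
Proof. by rewrite sqrtr_gt0 pmulrn_lgt0 ?pi_gt0. Qed.

Lemma normal_pdf_gt0 (m s x : R) : s != 0 -> 0 < normal_pdf m s x.
Proof.
by move=> s0; rewrite normal_pdfE// mulr_gt0 ?normal_peak_gt0 ?expR_gt0.
Qed.

Lemma normal_pdf_gt0E (m s x : R) : 0 < s ->
  normal_pdf m s x =
  (s * Num.sqrt (pi *+ 2))^-1 * expR (- (x - m) ^+ 2 / (s ^+ 2 *+ 2)).
Proof.
move=> s_gt0; rewrite /normal_pdf gt_eqF//= /normal_peak /normal_fun.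
by rewrite -mulrnAr sqrtrM ?sqr_ge0// sqrtr_sqr gtr0_norm.
Qed.

Lemma normal_pdf_center (m s x : R) : s != 0 ->
  normal_pdf m s x = normal_pdf 0 s (x - m).
Proof. by move=> s0; rewrite !normal_pdfE// /normal_fun subr0. Qed.

Lemma normal_pdfN (s x : R) : s != 0 -> normal_pdf 0 s (- x) = normal_pdf 0 s x.
Proof. by move=> s0; rewrite !normal_pdfE// /normal_fun !subr0 sqrrN. Qed.

Lemma normal_pdf_scale (r x : R) : 0 < r ->
  normal_pdf 0 r (r * x) * r = normal_pdf 0 1 x.
Proof.
move=> r_gt0; have pi2_gt0 := sqrt_pi2_gt0.
rewrite !normal_pdf_gt0E//.
have -> : - (r * x - 0) ^+ 2 / (r ^+ 2 *+ 2) = - (x - 0) ^+ 2 / (1 ^+ 2 *+ 2).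
  by field; rewrite gt_eqF.
by field; rewrite !gt_eqF.
Qed.

Lemma normal_pdf_mul (r s t x : R) : 0 < r ->
  normal_pdf 0 r (t - s * x) * normal_pdf 0 1 x =
  normal_pdf 0 (Num.sqrt (r ^+ 2 + s ^+ 2)) t *
  normal_pdf (s * t / (r ^+ 2 + s ^+ 2)) (r / Num.sqrt (r ^+ 2 + s ^+ 2)) x.
Proof.
move=> r_gt0; have pi2_gt0 := sqrt_pi2_gt0.
have P_gt0 : 0 < r ^+ 2 + s ^+ 2 by rewrite ltr_pwDl ?sqr_ge0 ?exprn_gt0.
have sqrtP_gt0 : 0 < Num.sqrt (r ^+ 2 + s ^+ 2) by rewrite sqrtr_gt0.
rewrite !normal_pdf_gt0E ?divr_gt0// mulrACA [RHS]mulrACA -!expRD.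
congr (_ * expR _); first by field; rewrite !gt_eqF.
by rewrite expr_div_n sqr_sqrtr ?ltW//; field; rewrite !gt_eqF.
Qed.

End normal_pdf.

Section normal_prob_integral.
Local Open Scope ereal_scope.
Context {R : realType}.
Local Notation mu := (@lebesgue_measure R).
Local Notation N := (normal_prob (0:R) 1).

Lemma ge0_integral_normal_prob (m s : R) (f : R -> \bar R) :
  measurable_fun setT f -> (forall x, 0 <= f x) ->
  \int[normal_prob m s]_x f x = \int[mu]_x (f x * (normal_pdf m s x)%:E).
Proof.
move=> mf f_ge0; apply: ge0_integral_density => //.
- exact: measurable_normal_pdf.
- exact: normal_pdf_ge0.
Qed.

Lemma integral_normal_prob_cst (m s c : R) :
  \int[normal_prob m s]_x c%:E = c%:E.
Proof. by rewrite integral_cst// [X in _ * X]integral_normal_pdf mule1. Qed.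

Lemma ge0_integral_normal_probN (s : R) (g : R -> \bar R) : s != 0%R ->
  measurable_fun setT g -> (forall x, 0 <= g x) ->
  \int[normal_prob 0 s]_x g (- x)%R = \int[normal_prob 0 s]_x g x.
Proof.
move=> s0 mg g_ge0.
rewrite !ge0_integral_normal_prob//; last exact: measurableT_comp.
rewrite -[RHS]ge0_integral_lebesgueN; last 2 first.
- apply: emeasurable_funM => //.
  by apply/measurable_EFinP; exact: measurable_normal_pdf.
- by move=> x; rewrite mule_ge0// lee_fin normal_pdf_ge0.
by apply: eq_integral => x _; rewrite normal_pdfN.
Qed.

Lemma normal_pdf_convolution (r s t : R) : (0 < r)%R ->
  \int[mu]_x (normal_pdf 0 r (t - s * x) * normal_pdf 0 1 x)%:E =
  (normal_pdf 0 (Num.sqrt (r ^+ 2 + s ^+ 2)) t)%:E.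
Proof.
move=> r_gt0; under eq_integral do rewrite normal_pdf_mul// EFinM.
rewrite ge0_integralZl//; last 3 first.
- by apply/measurable_EFinP; exact: measurable_normal_pdf.
- by move=> x _; rewrite lee_fin normal_pdf_ge0.
- by rewrite lee_fin normal_pdf_ge0.
by rewrite integral_normal_pdf mule1.
Qed.

Lemma ge0_integral_normal_prob_affine (r c : R) (h : R -> R) :
  (0 < r)%R -> continuous h -> (forall x, 0 <= h x)%R ->
  \int[N]_x (h (r * x + c))%:E = \int[normal_prob c r]_t (h t)%:E.
Proof.
move=> r_gt0 ch h_ge0; have r0 : r != 0%R by rewrite gt_eqF.
have mh : measurable_fun setT h by exact: continuous_measurable_fun.
rewrite !ge0_integral_normal_prob//; last 3 first.
- exact/measurable_EFinP.
- apply/measurable_EFinP/(measurableT_comp mh).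
  by apply: measurable_funD => //; exact: measurable_funM.
- by move=> x; rewrite lee_fin.
under [RHS]eq_integral do rewrite -EFinM.
rewrite [RHS](@ge0_integral_lebesgue_affine _ r (c / r)%R)//; last 2 first.
- by move=> t; apply: cvgM; [exact: ch | exact: continuous_normal_pdf].
- by move=> t; rewrite mulr_ge0 ?normal_pdf_ge0.
apply: eq_integral => x _; rewrite -EFinM -mulrA (normal_pdf_center c)//.
have -> : ((x + c / r) * r = r * x + c)%R by field.
by rewrite addrK normal_pdf_scale.
Qed.

Lemma ge0_integral_normal_prob_mixture (r s : R) (f : R -> \bar R) :
  (0 < r)%R -> measurable_fun setT f -> (forall t, 0 <= f t) ->
  \int[N]_x \int[normal_prob (s * x) r]_t f t =
  \int[normal_prob 0 (Num.sqrt (r ^+ 2 + s ^+ 2))]_t f t.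
Proof.
move=> r_gt0 mf f_ge0; have r0 : r != 0%R by rewrite gt_eqF.
pose k (xt : (measurableTypeR R * measurableTypeR R)%type) :=
  f xt.2 * (normal_pdf 0 r (xt.2 - s * xt.1))%:E.
have mk : measurable_fun setT k.
  apply: emeasurable_funM; first exact: measurableT_comp mf measurable_snd.
  apply/measurable_EFinP/(measurableT_comp (measurable_normal_pdf 0 r)).
  by apply: measurable_funB => //; exact: measurable_funM.
have k_ge0 xt : 0 <= k xt by rewrite mule_ge0// lee_fin normal_pdf_ge0.
have innerE x : \int[normal_prob (s * x) r]_t f t = \int[mu]_t k (x, t).
  rewrite (ge0_integral_normal_prob _ _ _ mf f_ge0).
  by apply: eq_integral => t _; rewrite (normal_pdf_center (s * x)).
under eq_integral do rewrite innerE.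
have mF := @measurable_fun_fubini_tonelli_F _ _ _ _ _ mu k mk k_ge0.
rewrite (ge0_integral_normal_prob _ _ _ mF); last first.
  by move=> x; exact: integral_ge0.
pose g (xt : (measurableTypeR R * measurableTypeR R)%type) :=
  k xt * (normal_pdf 0 1 xt.1)%:E.
have mg : measurable_fun setT g.
  apply: emeasurable_funM => //; apply/measurable_EFinP.
  exact: measurableT_comp (measurable_normal_pdf 0 1) measurable_fst.
have g_ge0 xt : 0 <= g xt by rewrite mule_ge0// lee_fin normal_pdf_ge0.
transitivity (\int[mu]_x \int[mu]_t g (x, t)).
  apply: eq_integral => x _; rewrite -ge0_integralZr//.
  - exact: measurableT_comp mk (pair1_measurable x).
  - by rewrite lee_fin normal_pdf_ge0.
rewrite (fubini_tonelli g mg g_ge0) (ge0_integral_normal_prob _ _ _ mf f_ge0).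
apply: eq_integral => t _; rewrite /g /k /=.
under eq_integral do rewrite -muleA -EFinM.
rewrite ge0_integralZl//; last 2 first.
- apply/measurable_EFinP; apply: measurable_funM.
    apply: measurableT_comp (measurable_normal_pdf 0 r) _.
    by apply: measurable_funB => //; exact: measurable_funM.
  exact: measurable_normal_pdf.
- by move=> x _; rewrite lee_fin mulr_ge0 ?normal_pdf_ge0.
by rewrite normal_pdf_convolution.
Qed.

Lemma ge0_integral_normal_prob_lincomb (r s : R) (h : R -> R) :
  (0 <= r)%R -> continuous h -> (forall x, 0 <= h x)%R ->
  \int[N]_x \int[N]_v (h (r * v + s * x))%:E =
  \int[N]_v (h (Num.sqrt (r ^+ 2 + s ^+ 2) * v))%:E.
Proof.
move=> r_ge0 ch h_ge0.
have mh : measurable_fun setT h by exact: continuous_measurable_fun.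
(* [normal_pdf m 0] is a junk value, so [r = 0] cannot go through a mixture. *)
have [r0|r_neq0] := eqVneq r 0%R; last first.
  have {r_ge0 r_neq0} r_gt0 : (0 < r)%R by rewrite lt_def r_neq0.
  have rho_gt0 : (0 < Num.sqrt (r ^+ 2 + s ^+ 2))%R.
    by rewrite sqrtr_gt0 ltr_pwDl ?sqr_ge0 ?exprn_gt0.
  under eq_integral => x _ do
    rewrite (ge0_integral_normal_prob_affine _ (s * x) _ r_gt0 ch h_ge0).
  rewrite (ge0_integral_normal_prob_mixture _ _ _ r_gt0); last 2 first.
  - exact/measurable_EFinP.
  - by move=> t; rewrite lee_fin.
  rewrite -(ge0_integral_normal_prob_affine _ 0 _ rho_gt0 ch h_ge0).
  by under eq_integral do rewrite addr0.
rewrite r0 expr0n add0r sqrtr_sqr.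
under eq_integral do under eq_integral do rewrite mul0r add0r.
under eq_integral do rewrite integral_normal_prob_cst.
have [s_ge0|s_lt0] := leP 0%R s; first by rewrite ger0_norm.
rewrite ltr0_norm// -ge0_integral_normal_probN; last 3 first.
- exact: oner_neq0.
- apply/measurable_EFinP/(measurableT_comp mh); exact: measurable_funM.
- by move=> x; rewrite lee_fin.
by apply: eq_integral => x _; rewrite mulrNN.
Qed.

End normal_prob_integral.

Section gaussian_vector.
Local Open Scope ereal_scope.
Context {R : realType}.
Local Notation N := (normal_prob (0:R) 1).

Lemma gauss_iter_lincomb (n : nat) (w : nat -> R) (h : R -> R) :
  continuous h -> (forall x, 0 <= h x)%R ->
  gauss_iter n (fun z => (h (\sum_(i < n) z i * w i))%:E) =
  \int[N]_v (h (Num.sqrt (\sum_(i < n) w i ^+ 2) * v))%:E.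
Proof.
elim: n h => [|n IH] h ch h_ge0 /=.
  rewrite !big_ord0 sqrtr0; under eq_integral do rewrite mul0r.
  by rewrite integral_normal_prob_cst.
have S_ge0 : (0 <= \sum_(i < n) w i ^+ 2)%R.
  by apply: sumr_ge0 => i _; exact: sqr_ge0.
transitivity (\int[N]_x \int[N]_v
    (h (Num.sqrt (\sum_(i < n) w i ^+ 2) * v + w n * x))%:E).
  apply: eq_integral => x _.
  rewrite -(IH (fun t => h (t + w n * x)%R)); last 2 first.
  - move=> t; apply: continuous_comp; last exact: ch.
    by apply: cvgD; [exact: cvg_id | exact: cvg_cst].
  - by move=> t; exact: h_ge0.
  congr (gauss_iter n _); apply/funext => z /=; congr (h _)%:E.
  rewrite big_ord_recr /= eqxx mulrC; congr (_ + _)%R.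
  by apply: eq_bigr => i _; rewrite ltn_eqF.
rewrite ge0_integral_normal_prob_lincomb ?sqrtr_ge0// sqr_sqrtr//.
by rewrite [in RHS]big_ord_recr.
Qed.

Lemma gauss_expect_lincomb (a : nat) (w : 'I_a -> R) (h : R -> R) :
  continuous h -> (forall x, 0 <= h x)%R ->
  gauss_expect (fun z => (h (\sum_(i < a) z i * w i))%:E) =
  \int[N]_v (h (Num.sqrt (\sum_(i < a) w i ^+ 2) * v))%:E.
Proof.
case: a w => [|a] w ch h_ge0.
  have := gauss_iter_lincomb 0 (fun=> 0%R) h ch h_ge0.
  rewrite /= !big_ord0 => <-.
  by rewrite /gauss_expect /= big_ord0.
rewrite (eq_bigr (fun i : 'I_a.+1 => w (inord i) ^+ 2)%R); last first.
  by move=> i _; rewrite inord_val.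
rewrite -(gauss_iter_lincomb a.+1 (fun k => w (inord k)) h ch h_ge0).
congr (gauss_iter _ _); apply/funext => z /=.
by under [in RHS]eq_bigr do rewrite inord_val.
Qed.

End gaussian_vector.

Section normal_abs_moment.
Local Open Scope ereal_scope.
Context {R : realType}.
Local Notation mu := (@lebesgue_measure R).
Local Notation N := (normal_prob (0:R) 1).

Lemma normr_le_expR_sqr (x : R) : (`|x| <= expR (x ^+ 2 / 4))%R.
Proof.
apply: le_trans (expR_ge1Dx _).
rewrite -real_normK ?num_real// -subr_ge0.
have -> : (1 + `|x| ^+ 2 / 4 - `|x| = (`|x| / 2 - 1) ^+ 2)%R by field.
exact: sqr_ge0.
Qed.

Lemma normal_pdf_mul_expR (x : R) :
  (normal_pdf 0 1 x * expR (x ^+ 2 / 4) =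
   Num.sqrt 2 * normal_pdf 0 (Num.sqrt 2) x)%R.
Proof.
have sqrt2_gt0 : (0 < Num.sqrt 2 :> R)%R by rewrite sqrtr_gt0.
have pi2_gt0 := @sqrt_pi2_gt0 R.
rewrite !normal_pdf_gt0E// sqr_sqrtr// -mulrA -expRD !subr0.
have -> : (- x ^+ 2 / (1 ^+ 2 *+ 2) + x ^+ 2 / 4 = - x ^+ 2 / (2 *+ 2))%R.
  by field.
by field; rewrite !gt_eqF.
Qed.

Let integral_normal_prob_normr :
  \int[N]_x (`|x|)%:E = \int[mu]_x ((`|x|)%:E * (normal_pdf 0 1 x)%:E).
Proof.
by apply: ge0_integral_normal_prob => //; exact/measurable_EFinP.
Qed.

Let measurable_normr_normal_pdf :
  measurable_fun setT (fun x : R => (`|x|)%:E * (normal_pdf 0 1 x)%:E).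
Proof.
apply: emeasurable_funM; apply/measurable_EFinP => //.
exact: measurable_normal_pdf.
Qed.

Lemma integral_normal_prob_normr_lt_pinfty : \int[N]_x (`|x|)%:E < +oo.
Proof.
rewrite integral_normal_prob_normr.
apply: (@le_lt_trans _ _
  (\int[mu]_x (Num.sqrt 2 * normal_pdf 0 (Num.sqrt 2) x)%:E)).
  apply: ge0_le_integral => //.
  - by move=> x _; rewrite mule_ge0// lee_fin normal_pdf_ge0.
  - apply/measurable_EFinP; apply: measurable_funM => //.
    exact: measurable_normal_pdf.
  move=> x _; rewrite -EFinM lee_fin -normal_pdf_mul_expR mulrC.
  by rewrite ler_wpM2l ?normal_pdf_ge0 ?normr_le_expR_sqr.
under eq_integral do rewrite EFinM.
rewrite ge0_integralZl//; last 2 first.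
- by apply/measurable_EFinP; exact: measurable_normal_pdf.
- by move=> x _; rewrite lee_fin normal_pdf_ge0.
by rewrite integral_normal_pdf mule1 ltry.
Qed.

Lemma integral_normal_prob_normr_gt0 : 0 < \int[N]_x (`|x|)%:E.
Proof.
rewrite integral_normal_prob_normr.
(* On [1, 2], |x| >= 1 and the density is at least its value at 2. *)
pose c : R := normal_pdf 0 1 2.
have c_gt0 : (0 < c)%R by exact: normal_pdf_gt0.
apply: (@lt_le_trans _ _ (\int[mu]_x (c * \1_`[(1:R), 2]%classic x)%:E)).
  under eq_integral do rewrite EFinM.
  rewrite ge0_integralZl//; last 2 first.
  - by apply/measurable_EFinP; exact: measurable_indic.
  - by rewrite lee_fin ltW.
  rewrite integral_indic// setIT [X in _ * X](_ : _ = (2 - 1)%:E); last first.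
    by have := @lebesgue_measure_itv R `[1%R, 2%R]; rewrite /= lte_fin ltr1n.
  by rewrite -EFinM lte_fin mulr_gt0// subr_gt0 ltr1n.
apply: ge0_le_integral => //.
- by move=> x _; rewrite lee_fin mulr_ge0 ?(ltW c_gt0)// indicE ler0n.
- apply/measurable_EFinP; apply: measurable_funM => //;
  exact: measurable_indic.
move=> x _; rewrite -EFinM lee_fin indicE.
have [|_] := boolP (x \in _); last by rewrite mulr0 mulr_ge0 ?normal_pdf_ge0.
rewrite inE /= in_itv /= => /andP[x_ge1 x_le2].
rewrite mulr1 -[c]mul1r; apply: ler_pM => //; first exact: ltW.
  by rewrite ger0_norm// (le_trans _ x_ge1).
rewrite /c !normal_pdf_gt0E// ler_pM2l ?invr_gt0 ?mul1r ?sqrt_pi2_gt0//.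
by rewrite ler_expR !subr0 ler_pM2r ?invr_gt0// lerN2; nra.
Qed.

End normal_abs_moment.

Definition col_norm {R : rcfType} {a b : nat} (W : 'M[R]_(a, b)) (k : 'I_b)
  : R := Num.sqrt (\sum_(i < a) W i k ^+ 2).

Section positive_homogeneity.
Context {R : realType} (sigma : R -> R).
Hypothesis sigma_hom : pos_homogeneous sigma.
Local Notation N := (normal_prob (0:R) 1).

Lemma pos_homogeneousE (t : R) :
  sigma t = if 0 <= t then t * sigma 1 else - t * sigma (-1).
Proof.
case: ifPn => t_ge0; first by rewrite -sigma_hom// mulr1.
by rewrite -sigma_hom ?mulrN1 ?opprK// oppr_ge0 ltW// ltNge.
Qed.

Lemma pos_homogeneous_normr_gt0 :
  (exists t, sigma t != 0) -> 0 < `|sigma 1| + `|sigma (-1)|.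
Proof.
move=> [t]; apply: contraNT; rewrite -leNgt => le0.
have : (`|sigma 1| == 0) && (`|sigma (-1)| == 0).
  by rewrite -paddr_eq0// eq_le le0 addr_ge0.
rewrite !normr_eq0 => /andP[/eqP s1 /eqP s2].
by rewrite pos_homogeneousE s1 s2 !mulr0 if_same.
Qed.

Lemma normr_pos_homogeneousE (t : R) :
  `|sigma t| = (`|sigma 1| + `|sigma (-1)|) / 2 * `|t|
               + (`|sigma 1| - `|sigma (-1)|) / 2 * t.
Proof.
rewrite pos_homogeneousE; case: ifPn => t_ge0.
  by rewrite normrM ger0_norm//; field.
have t_lt0 : t < 0 by rewrite ltNge.
by rewrite normrM (ltr0_norm t_lt0) gtr0_norm ?oppr_gt0//; field.
Qed.

Lemma continuous_normr_pos_homogeneous : continuous (fun t => `|sigma t|).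
Proof.
rewrite (_ : (fun t => _) = fun t => (`|sigma 1| + `|sigma (-1)|) / 2 * `|t|
                                   + (`|sigma 1| - `|sigma (-1)|) / 2 * t).
  by move=> t; apply: cvgD; apply: cvgM;
    [exact: cvg_cst | exact: norm_continuous | exact: cvg_cst | exact: cvg_id].
by apply/funext => t; exact: normr_pos_homogeneousE.
Qed.

Let measurable_normr_sigma : measurable_fun setT (fun x => (`|sigma x|)%:E).
Proof.
apply/measurable_EFinP; apply: continuous_measurable_fun.
exact: continuous_normr_pos_homogeneous.
Qed.

Lemma integral_normal_prob_normr_pos_homogeneous :
  (\int[N]_x (`|sigma x|)%:E =
   ((`|sigma 1| + `|sigma (-1)|) / 2 * fine (\int[N]_x (`|x|)%:E))%:E)%E.
Proof.
set A := (`|sigma 1| + `|sigma (-1)|) / 2.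
set C := (\int[N]_x (`|sigma x|)%:E)%E.
have m_fin : (\int[N]_x (`|x|)%:E)%E \is a fin_num.
  by rewrite ge0_fin_numE ?integral_normal_prob_normr_lt_pinfty// integral_ge0.
have h_ge0 x : (0 <= (`|sigma x|)%:E)%E by rewrite lee_fin.
(* By symmetry of N(0,1), the odd part of [|sigma|] integrates to 0. *)
have CC : (C + C = (2 * A * fine (\int[N]_x (`|x|)%:E))%:E)%E.
  rewrite {1}/C -(ge0_integral_normal_probN 1 _ (oner_neq0 R)
                   measurable_normr_sigma h_ge0).
  rewrite /C -ge0_integralD//; last first.
    exact: measurableT_comp measurable_normr_sigma _.
  transitivity (\int[N]_x ((2 * A)%:E * (`|x|)%:E))%E.
    apply: eq_integral => x _; rewrite -EFinD -EFinM.
    rewrite (normr_pos_homogeneousE x) (normr_pos_homogeneousE (- x)) normrN.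
    by congr EFin; rewrite /A; ring.
  rewrite ge0_integralZl//; last 2 first.
  - exact/measurable_EFinP.
  - by rewrite lee_fin mulr_ge0// divr_ge0// addr_ge0.
  by rewrite !EFinM fineK.
have C_ge0 : (0 <= C)%E by exact: integral_ge0.
move: CC C_ge0; case: C => [c| |]//; rewrite -EFinD => -[cE] _.
by congr EFin; lra.
Qed.

Lemma neuron_actE (a b : nat) (W : 'M[R]_(a, b)) (k : 'I_b) :
  neuron_act sigma W k = ((col_norm W k)%:E * \int[N]_x (`|sigma x|)%:E)%E.
Proof.
transitivity (\int[N]_v (`|sigma (col_norm W k * v)|)%:E)%E.
  exact: (gauss_expect_lincomb _ (W ^~ k) _ continuous_normr_pos_homogeneous).
have w_ge0 : 0 <= col_norm W k by exact: sqrtr_ge0.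
under eq_integral do rewrite sigma_hom// normrM ger0_norm// EFinM.
by rewrite ge0_integralZl.
Qed.

End positive_homogeneity.

Lemma normr_entry_le_frobenius {R : rcfType} {m n : nat} (M : 'M[R]_(m, n))
    (i : 'I_m) (j : 'I_n) :
  `|M i j| <= Num.sqrt (\sum_(i' < m) \sum_(j' < n) M i' j' ^+ 2).
Proof.
have sum_ge0 (F : 'I_m -> 'I_n -> R) :
    0 <= \sum_(i' < m) \sum_(j' < n) F i' j' ^+ 2.
  by apply: sumr_ge0 => i' _; apply: sumr_ge0 => j' _; exact: sqr_ge0.
rewrite -sqrtr_sqr ler_sqrt ?sum_ge0// (bigD1 i)//= (bigD1 j)//= -addrA lerDl.
by apply: addr_ge0; apply: sumr_ge0 => i' _;
  [exact: sqr_ge0 | apply: sumr_ge0 => j' _; exact: sqr_ge0].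
Qed.

Lemma col_norm_DfI_bounds {R : realType} {a b : nat} (W : 'M[R]_(a, b))
    (k : 'I_b) :
  Num.sqrt (1 - Num.sqrt (DfI W)) <= col_norm W k
  <= Num.sqrt (1 + Num.sqrt (DfI W)).
Proof.
have := normr_entry_le_frobenius (W^T *m W - 1%:M) k k.
have -> : (W^T *m W - 1%:M) k k = \sum_(i < a) W i k ^+ 2 - 1.
  rewrite !mxE eqxx mulr1n; congr (_ - _).
  by apply: eq_bigr => i _; rewrite !mxE expr2.
rewrite -/(DfI W) ler_norml => /andP[lb ub].
by apply/andP; split; apply: ler_wsqrtr; lra.
Qed.

Lemma ratio_mean_bounds {R : realFieldType} {b : nat} (x : 'I_b -> R) (p q : R)
    (j : 'I_b) : 0 < p -> (forall k, p <= x k <= q) ->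
  p / q <= x j / (b%:R^-1 * \sum_(k < b) x k) <= q / p.
Proof.
move=> p_gt0 x_bnd; have /andP[pj jq] := x_bnd j.
have q_gt0 : 0 < q := lt_le_trans p_gt0 (le_trans pj jq).
have b_gt0 : 0 < b%:R :> R.
  by rewrite ltr0n (leq_ltn_trans (leq0n j) (ltn_ord j)).
have : \sum_(k < b) p <= \sum_(k < b) x k <= \sum_(k < b) q.
  by apply/andP; split; apply: ler_sum => k _; case/andP: (x_bnd k).
rewrite !sumr_const card_ord -(mulr_natr p) -(mulr_natr q) => /andP[lb ub].
have pM : p <= b%:R^-1 * \sum_(k < b) x k by rewrite mulrC ler_pdivlMr.
have Mq : b%:R^-1 * \sum_(k < b) x k <= q by rewrite mulrC ler_pdivrMr.
have M_gt0 := lt_le_trans p_gt0 pM.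
have xj_gt0 := lt_le_trans p_gt0 pj.
apply/andP; split.
- rewrite ler_pdivlMr// mulrAC ler_pdivrMr//.
  by apply: ler_pM => //; exact: ltW.
- rewrite ler_pdivrMr// mulrAC ler_pdivlMr//.
  by apply: ler_pM => //; exact: ltW.
Qed.

Lemma activity_score_scale {R : realType} {a b : nat} (sigma : R -> R)
    (W : 'M[R]_(a, b)) (rho : 'I_b -> R) (c : R) : c != 0 ->
  (forall k, neuron_act sigma W k = (rho k * c)%:E) ->
  forall j, activity_score sigma W j = rho j / (b%:R^-1 * \sum_(k < b) rho k).
Proof.
move=> c0 actE j; rewrite /activity_score actE /=.
under eq_bigr do rewrite actE /=.
by rewrite -mulr_suml mulrA invfM mulrACA divff// mulr1.
Qed.

Theorem theorem4 (R : realType) (a b : nat) (W : 'M[R]_(a, b))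
    (sigma : R -> R) :
  pos_homogeneous sigma ->
  (exists t : R, sigma t != 0) ->
  Num.sqrt (DfI W) < 1 ->
  forall j : 'I_b,
    Num.sqrt ((1 - Num.sqrt (DfI W)) / (1 + Num.sqrt (DfI W)))
      <= activity_score sigma W j
    /\ activity_score sigma W j
      <= Num.sqrt ((1 + Num.sqrt (DfI W)) / (1 - Num.sqrt (DfI W))).
Proof.
move=> sigma_hom sigma_neq0 e_lt1 j.
pose c := (`|sigma 1| + `|sigma (-1)|) / 2
          * fine (\int[normal_prob 0 1]_x (`|x|)%:E)%E.
have c_gt0 : 0 < c.
  rewrite mulr_gt0 ?divr_gt0 ?pos_homogeneous_normr_gt0// fine_gt0//.
  rewrite integral_normal_prob_normr_gt0.
  exact: integral_normal_prob_normr_lt_pinfty.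
have actE k : neuron_act sigma W k = (col_norm W k * c)%:E.
  by rewrite neuron_actE// integral_normal_prob_normr_pos_homogeneous.
rewrite (activity_score_scale _ _ _ _ (lt0r_neq0 c_gt0) actE).
have e_ge0 := sqrtr_ge0 (DfI W).
rewrite !sqrtrM ?sqrtrV ?subr_ge0 ?addr_ge0 ?(ltW e_lt1)//.
apply/andP/ratio_mean_bounds; last exact: col_norm_DfI_bounds.
by rewrite sqrtr_gt0 subr_gt0.
Qed.
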